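(* Let $G$ be an outerplanar graph with a plane embedding in which the boundary of the outer face is a Hamiltonian cycle $C$ of $G$ (e.g. $G$ maximal outerplanar on at least 3 vertices), and let $\mathcal H,\mathcal K$ be non-piercing families of subgraphs of $G$. Then the cycle intersection system $(C,\{V(H)\}_{H\in\mathcal H},\{V(K)\}_{K\in\mathcal K})$ satisfies the strong $axax$-free property.
   Context: A subgraph $H$ of $G$ is identified with its vertex set $V(H)$ (subgraphs are induced). A family $\mathcal H$ of subgraphs of $G$ is non-piercing if every $H\in\mathcal H$ induces a connected subgraph of $G$ and, for all $H,H'\in\mathcal H$, $G[V(H)\setminus V(H')]$ is connected (an empty vertex set is regarded as connected). Let $C$ be a cycle with a fixed cyclic orientation; ''vertices $p_1,p_2,p_3,p_4$ in cyclic order'' means they are four distinct vertices met in this order when traversing $C$. For families $\mathcal H,\mathcal K$ of vertex subsets of $C$: a pair $H,H'\in\mathcal H$ is an $axax$-pair if there are vertices $a_1,x_1,a_2,x_2$ in cyclic order with $a_1,a_2\in H\setminus H'$ and $x_1,x_2\in H'$; $(C,\mathcal H)$ is $axax$-free if it has no $axax$-pair; $(C,\mathcal H,\mathcal K)$ satisfies the intersection property if for all $H\in\mathcal H$, $K\in\mathcal K$ having vertices $h_1,k_1,h_2,k_2$ in cyclic order with $h_1,h_2\in H$, $k_1,k_2\in K$, we have $H\cap K\ne\emptyset$; and $(C,\mathcal H,\mathcal K)$ is strong $axax$-free if $(C,\mathcal H)$ and $(C,\mathcal K)$ are both $axax$-free and the intersection property holds. *)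

From mathcomp Require Import all_boot.
Set Implicit Arguments. Unset Strict Implicit. Unset Printing Implicit Defensive.

Section Defs.
Variable T : finType.

Definition simple_graph (e : rel T) : Prop := symmetric e /\ irreflexive e.

Definition induced (e : rel T) (S : {set T}) : rel T :=
  [rel x y | [&& e x y, x \in S & y \in S]].

(* G[S] connected (empty set counts as connected). *)
Definition connected_in (e : rel T) (S : {set T}) : Prop :=
  {in S &, forall x y, connect (induced e S) x y}.

(* Non-piercing family of subgraphs (identified with vertex sets). *)
Definition non_piercing (e : rel T) (F : {set {set T}}) : Prop :=
  (forall H, H \in F -> connected_in e H) /\
  (forall H H', H \in F -> H' \in F -> connected_in e (H :\: H')).

(* p1 p2 p3 p4 are four distinct vertices met in this order along the
   cycle c (c : seq T duplicate-free, traversed cyclically). *)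
Definition cyc4 (c : seq T) (p1 p2 p3 p4 : T) : Prop :=
  [/\ p1 \in c, p2 \in c, p3 \in c & p4 \in c] /\
  let i1 := index p1 c in let i2 := index p2 c in
  let i3 := index p3 c in let i4 := index p4 c in
  [\/ (i1 < i2 < i3) && (i3 < i4),
      (i2 < i3 < i4) && (i4 < i1),
      (i3 < i4 < i1) && (i1 < i2) |
      (i4 < i1 < i2) && (i2 < i3)].

(* G is a graph with Hamiltonian cycle c that bounds the outer face of a
   plane embedding: combinatorially, c is a Hamiltonian cycle of G and no
   two edges of G cross with respect to the cyclic order of c. *)
Definition ham_cycle (e : rel T) (c : seq T) : Prop :=
  [/\ 3 <= size c, uniq c, (forall x, x \in c) & cycle e c].

Definition outerplane_ham (e : rel T) (c : seq T) : Prop :=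
  ham_cycle e c /\
  (forall p1 p2 p3 p4, cyc4 c p1 p2 p3 p4 -> e p1 p3 -> ~~ e p2 p4).

Definition axax_pair (c : seq T) (H H' : {set T}) : Prop :=
  exists a1 x1 a2 x2, [/\ cyc4 c a1 x1 a2 x2,
    a1 \in H :\: H', a2 \in H :\: H', x1 \in H' & x2 \in H'].

Definition axax_free (c : seq T) (F : {set {set T}}) : Prop :=
  forall H H', H \in F -> H' \in F -> ~ axax_pair c H H'.

Definition intersection_property (c : seq T) (F K : {set {set T}}) : Prop :=
  forall H Kk, H \in F -> Kk \in K ->
  forall h1 k1 h2 k2, cyc4 c h1 k1 h2 k2 ->
    h1 \in H -> h2 \in H -> k1 \in Kk -> k2 \in Kk ->
    H :&: Kk != set0.

Definition strong_axax_free (c : seq T) (F K : {set {set T}}) : Prop :=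
  [/\ axax_free c F, axax_free c K & intersection_property c F K].

End Defs.

(** Number the vertices by their position on [c]; four vertices are in
    cyclic order exactly when the chord [p1 p3] separates [p2] from [p4].
    Let [A] and [B] be disjoint, [a1 a2] connected in [G[A]] and [x1 x2]
    connected in [G[B]].  As edges do not cross, an edge [u v] of [G[B]]
    separates the ends of no edge of [G[A]], so walking along [G[A]] it does
    not separate [a1] from [a2].  Separation of two disjoint pairs is
    symmetric, so [a1 a2] does not separate [u] from [v], and walking along
    [G[B]] it does not separate [x1] from [x2].  Both [axax]-freeness
    ([A = H :\: H'], [B = H']) and the intersection property ([A = H],
    [B = K]) are instances of this. *)

From mathcomp Require Import all_boot.
From mathcomp Require Import zify.

Set Implicit Arguments.
Unset Strict Implicit.
Unset Printing Implicit Defensive.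

Definition inside (i j k : nat) : bool := (i < k < j) || (j < k < i).

Lemma inside_sep_sym i j k l : uniq [:: i; j; k; l] ->
  (inside i j k == inside i j l) = (inside k l i == inside k l j).
Proof.
rewrite /inside /= !inE !negb_or => /and4P[/and3P[ij ik il] /andP[jk jl] kl _].
case: (ltngtP i j) ij => // _ _; case: (ltngtP i k) ik => // _ _;
case: (ltngtP i l) il => // _ _; case: (ltngtP j k) jk => // _ _;
case: (ltngtP j l) jl => // _ _; case: (ltngtP k l) kl => // _ _ //=; lia.
Qed.

Section Outerplane.

Variables (T : finType) (e : rel T) (c : seq T).
Hypotheses (e_simple : simple_graph e) (c_outerplane : outerplane_ham e c).

Let pos (v : T) : nat := index v c.

Definition separates (a b v : T) : bool := inside (pos a) (pos b) (pos v).

Lemma pos_inj : injective pos.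
Proof.
have [[_ _ c_all _] _] := c_outerplane.
move=> u v; exact: (@index_inj _ u c u v (c_all u) (c_all v)).
Qed.

Lemma edge_neq u v : e u v -> u != v.
Proof. by case: e_simple => _ e_irr; apply: contraTneq => ->; rewrite e_irr. Qed.

Lemma separates_sep_sym a b u v : uniq [:: a; b; u; v] ->
  (separates a b u == separates a b v) = (separates u v a == separates u v b).
Proof. by move=> abuv; apply: inside_sep_sym; rewrite -(map_inj_uniq pos_inj) in abuv. Qed.

Lemma cyc4_separates p1 p2 p3 p4 : cyc4 c p1 p2 p3 p4 ->
  p1 != p3 /\ separates p1 p3 p2 != separates p1 p3 p4.
Proof.
rewrite /separates /inside -(inj_eq pos_inj) /pos => -[_].
by case=> /andP[/andP[h1 h2] h3]; split; rewrite ?h1 ?h2 ?h3 //=; lia.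
Qed.

Lemma separates_cyc4 a b u v : uniq [:: a; b; u; v] ->
  separates a b u != separates a b v -> cyc4 c a u b v \/ cyc4 c a v b u.
Proof.
have [[_ _ c_all _] _] := c_outerplane.
rewrite -(map_inj_uniq pos_inj) /separates /inside /cyc4 !c_all /= /pos.
set A := index a c; set B := index b c; set U := index u c; set V := index v c.
rewrite !inE !negb_or => /and4P[/and3P[ab au av] /andP[bu bv] uv _].
case: (ltngtP A B) ab => // _ _; case: (ltngtP A U) au => // _ _;
case: (ltngtP A V) av => // _ _; case: (ltngtP B U) bu => // _ _;
case: (ltngtP B V) bv => // _ _; case: (ltngtP U V) uv => // _ _ //= _.
all: by [left; split=> //; apply/or4P | right; split=> //; apply/or4P].
Qed.

Lemma edges_noncrossing a b u v : e a b -> e u v ->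
  a != u -> a != v -> b != u -> b != v -> separates a b u = separates a b v.
Proof.
move=> eab euv au av bu bv; apply/eqP/negP => /negP cross.
have abuv : uniq [:: a; b; u; v].
  by rewrite /= !inE !negb_or au av bu bv (edge_neq eab) (edge_neq euv).
have [_ no_crossing] := c_outerplane; have [e_sym _] := e_simple.
by case: (separates_cyc4 abuv cross) => /no_crossing/(_ eab)/negP; apply; rewrite // e_sym.
Qed.

Lemma disjoint_connect_not_cyc4 (A B : {set T}) a1 a2 x1 x2 :
  [disjoint A & B] -> a1 \in A -> a2 \in A -> x1 \in B -> x2 \in B ->
  connect (induced e A) a1 a2 -> connect (induced e B) x1 x2 ->
  ~ cyc4 c a1 x1 a2 x2.
Proof.
move=> AB a1A a2A x1B x2B a12 x12 /cyc4_separates[a1a2 interleaved].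
have AB_neq y z : y \in A -> z \in B -> y != z.
  by move=> yA zB; apply: contraTneq yA => ->; rewrite (disjointFl AB zB).
apply/negP: interleaved; rewrite negbK.
have sideB : closed (induced e B) [pred v | separates a1 a2 v].
  move=> u v /and3P[euv uB vB] /=; apply/eqP.
  have a12uv : uniq [:: a1; a2; u; v].
    by rewrite /= !inE !negb_or a1a2 (edge_neq euv) !AB_neq.
  rewrite separates_sep_sym //; apply/eqP.
  have sideA : closed (induced e A) [pred y | separates u v y].
    move=> y z /and3P[eyz yA zA] /=.
    by apply: edges_noncrossing; rewrite // eq_sym AB_neq.
  exact: closed_connect sideA _ _ a12.
exact/eqP/(closed_connect sideB x12).
Qed.

Lemma non_piercing_axax_free (F : {set {set T}}) :
  non_piercing e F -> axax_free c F.
Proof.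
move=> [F_conn F_diff] H H' HF H'F [a1 [x1 [a2 [x2 [cyc a1H a2H x1H' x2H']]]]].
have disj : [disjoint H :\: H' & H'].
  by rewrite disjoint_subset; apply/subsetP => x; rewrite !inE => /andP[].
apply: (disjoint_connect_not_cyc4 disj a1H a2H x1H' x2H' _ _ cyc).
- exact: F_diff.
- exact: F_conn.
Qed.

Lemma non_piercing_intersection_property (F K : {set {set T}}) :
  non_piercing e F -> non_piercing e K -> intersection_property c F K.
Proof.
move=> [F_conn _] [K_conn _] H Kk HF KkK h1 k1 h2 k2 cyc h1H h2H k1K k2K.
rewrite setI_eq0; apply/negP => disj.
apply: (disjoint_connect_not_cyc4 disj h1H h2H k1K k2K _ _ cyc).
- exact: F_conn.
- exact: K_conn.
Qed.

End Outerplane.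

Theorem mainTheorem13 (T : finType) (e : rel T) (c : seq T)
    (HH KK : {set {set T}}) :
  simple_graph e ->
  outerplane_ham e c ->
  non_piercing e HH ->
  non_piercing e KK ->
  strong_axax_free c HH KK.
Proof.
move=> e_simple c_outerplane HH_np KK_np; split.
- exact: (non_piercing_axax_free e_simple c_outerplane HH_np).
- exact: (non_piercing_axax_free e_simple c_outerplane KK_np).
- exact: (non_piercing_intersection_property e_simple c_outerplane HH_np KK_np).
Qed.
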